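(* Let $n,r,s,t\in\mathbb N$, let $G_{n,r,s,t}=(V,E,c)$ be the graph described in the context, and let $F\subseteq E$ be functional. Then the set of optimal edges for the subgraph $G_F$ (i.e. the set of edges $(u,v)\in F$ with $c(u,v)+y(v)=y(u)$, where $y(x)$ denotes the cost of a shortest path from $x$ to the target $\mathsf t$ in $G_F$) is exactly $\mathcal B_F$.
   Context: The graph $G_{n,r,s,t}$. Let $[m]=\{1,\dots,m\}$ and $\epsilon=1/(rs)$. Vertices: a target $\mathsf t$ (also denoted $u_{n+1}$ and $w_{n+1}$), $u_i,w_i$ for $i\in[n]$, $a_{i,j,k}$ for $i\in[n],j\in[r],k\in[s]$, and $b_{i,j}$ for $i\in[n],j\in[rs]$. Edges (for all $i\in[n]$; ''$t$ copies'' means $t$ parallel edges indexed by $\ell\in[t]$): - $a^1_{i,j,k}:a_{i,j,k}\to a_{i,j,k+1}$, cost $0$ ($j\in[r],k\in[s-1]$); $a^1_{i,j,s}:a_{i,j,s}\to b_{i,1}$, cost $0$; - $a^{0,\ell}_{i,j,k}:a_{i,j,k}\to u_{i+1}$, cost $2^{2i+1}+(k-1)\epsilon$, $t$ copies ($j\in[r],k\in[s]$); - $b^1_{i,j}:b_{i,j}\to b_{i,j+1}$, cost $0$ ($j\in[rs-1]$); $b^1_{i,rs}:b_{i,rs}\to w_{i+1}$, cost $0$; - $b^{0,\ell}_{i,j}:b_{i,j}\to u_{i+1}$, cost $2^{2i+1}+1+(j-1)\epsilon$, $t$ copies ($j\in[rs]$); - $u^{1,\ell}_i:u_i\to b_{i,1}$,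 cost $0$, $t$ copies; $u^{0,\ell}_i:u_i\to u_{i+1}$, cost $2^{2i}$, $t$ copies; - $w^{j,\ell}_i:w_i\to a_{i,j,1}$, cost $0$, $t$ copies for each $j\in[r]$; $w^{0,\ell}_i:w_i\to w_{i+1}$, cost $2^{2i}$, $t$ copies. Edge groups: ${\bf a}^1_{i,j}=\{a^1_{i,j,k}:k\in[s]\}$, ${\bf a}^0_{i,j,k}=\{a^{0,\ell}_{i,j,k}:\ell\in[t]\}$, ${\bf b}^1_i=\{b^1_{i,j}:j\in[rs]\}$, ${\bf b}^0_{i,j}=\{b^{0,\ell}_{i,j}:\ell\in[t]\}$, ${\bf u}^1_i=\{u^{1,\ell}_i\}_\ell$, ${\bf u}^0_i=\{u^{0,\ell}_i\}_\ell$, ${\bf w}^j_i=\{w^{j,\ell}_i\}_\ell$ ($j\in[r]$), ${\bf w}^0_i=\{w^{0,\ell}_i\}_\ell$. The multi-edges are the sets ${\bf u}^1_i,{\bf u}^0_i,{\bf w}^0_i,{\bf b}^0_{i,j},{\bf a}^0_{i,j,k},{\bf w}^j_i$. A set $F\subseteq E$ is functional if it intersects every multi-edge. Write ${\bf a}^1_i\sqsubseteq F$ if ${\bf a}^1_{i,j}\subseteq F$ for some $j\in[r]$. Define $last({\bf b}^1_i,F)=\max(\{0\}\cup\{j\in[rs]:b^1_{i,j}\notin F\})$, $last({\bf a}^1_{i,j},F)=\max(\{0\}\cup\{k\in[s]:a^1_{i,j,k}\notin F\})$, and $reset(F)=\max(\{0\}\cup\{i\in[n]:{\bf b}^1_i\subseteq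 F\text{ and not }{\bf a}^1_i\sqsubseteq F\})$. For functional $F$, $\mathcal B_F\subseteq F$ consists exactly of the following edges: (i) for each $i>reset(F)$ with ${\bf b}^1_i\subseteq F$: all $b^1_{i,j}$ ($j\in[rs]$); for $j\in[r],k\in[s]$: $a^1_{i,j,k}$ if $k>last({\bf a}^1_{i,j},F)$, and ${\bf a}^0_{i,j,k}\cap F$ otherwise; ${\bf u}^1_i\cap F$; ${\bf w}^j_i\cap F$ for every $j$ with ${\bf a}^1_{i,j}\subseteq F$. (ii) for each $i>reset(F)$ with ${\bf b}^1_i\not\subseteq F$: for $j\in[rs]$: $b^1_{i,j}$ if $j>last({\bf b}^1_i,F)$, and ${\bf b}^0_{i,j}\cap F$ otherwise; ${\bf a}^0_{i,j,k}\cap F$ for all $j,k$; ${\bf u}^0_i\cap F$; ${\bf w}^0_i\cap F$. (iii) for $i=reset(F)$ (if $\ge1$): all $b^1_{i,j}$; for $j\in[r],k\in[s]$: $a^1_{i,j,k}$ if $k>last({\bf a}^1_{i,j},F)$, and ${\bf a}^0_{i,j,k}\cap F$ otherwise; ${\bf u}^1_i\cap F$; ${\bf w}^0_i\cap F$. (iv) for each $i<reset(F)$: ${\bf b}^0_{i,j}\cap F$ for all $j\in[rs]$; ${\bf a}^0_{i,j,k}\cap F$ for all $j,k$; ${\bf u}^0_i\cap F$; ${\bf w}^j_i\cap F$ for all $j\in[r]$. *)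

From mathcomp Require Import all_boot all_order all_algebra.
Set Implicit Arguments. Unset Strict Implicit. Unset Printing Implicit Defensive.
Import Order.TTheory GRing.Theory Num.Theory.

(* Vertices of G_{n,r,s,t}.  The target t = u_{n+1} = w_{n+1} is [T]. *)
Inductive vertex : Type :=
| U (i : nat) | W (i : nat) | A (i j k : nat) | B (i j : nat) | T.

(* Edge labels (l is the copy index in [t]). *)
Inductive edge : Type :=
| EA1 (i j k : nat)
| EA0 (i j k l : nat)
| EB1 (i j : nat)
| EB0 (i j l : nat)
| EU1 (i l : nat)
| EU0 (i l : nat)
| EW  (i j l : nat)
| EW0 (i l : nat).

Definition inI (m x : nat) : bool := (1 <= x <= m)%N.

Section Graph.
Variables n r s t : nat.

Definition uvert (i : nat) : vertex := if (i <= n)%N then U i else T.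
Definition wvert (i : nat) : vertex := if (i <= n)%N then W i else T.

Definition inVert (v : vertex) : bool :=
  match v with
  | U i | W i => inI n i
  | A i j k => [&& inI n i, inI r j & inI s k]
  | B i j => inI n i && inI (r * s) j
  | T => true
  end.

Definition inEdges (e : edge) : bool :=
  match e with
  | EA1 i j k => [&& inI n i, inI r j & inI s k]
  | EA0 i j k l => [&& inI n i, inI r j, inI s k & inI t l]
  | EB1 i j => inI n i && inI (r * s) j
  | EB0 i j l => [&& inI n i, inI (r * s) j & inI t l]
  | EU1 i l | EU0 i l | EW0 i l => inI n i && inI t l
  | EW i j l => [&& inI n i, inI r j & inI t l]
  end.

Definition src (e : edge) : vertex :=
  match e with
  | EA1 i j k | EA0 i j k _ => A i j k
  | EB1 i j | EB0 i j _ => B i j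
  | EU1 i _ | EU0 i _ => U i
  | EW i _ _ | EW0 i _ => W i
  end.

Definition dst (e : edge) : vertex :=
  match e with
  | EA1 i j k => if (k < s)%N then A i j k.+1 else B i 1
  | EA0 i _ _ _ => uvert i.+1
  | EB1 i j => if (j < r * s)%N then B i j.+1 else wvert i.+1
  | EB0 i _ _ => uvert i.+1
  | EU1 i _ => B i 1
  | EU0 i _ => uvert i.+1
  | EW i j _ => A i j 1
  | EW0 i _ => wvert i.+1
  end.

Local Open Scope ring_scope.

Definition eps : rat := ((r * s)%N%:R)^-1.

Definition cost (e : edge) : rat :=
  match e with
  | EA1 _ _ _ | EB1 _ _ | EU1 _ _ | EW _ _ _ => 0
  | EA0 i _ k _ => (2 ^ (2 * i + 1))%N%:R + (k - 1)%N%:R * eps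
  | EB0 i j _ => (2 ^ (2 * i + 1))%N%:R + 1 + (j - 1)%N%:R * eps
  | EU0 i _ | EW0 i _ => (2 ^ (2 * i))%N%:R
  end.

Local Close Scope ring_scope.

Definition functional (F : pred edge) : Prop :=
  forall i, inI n i ->
    (exists2 l, inI t l & F (EU1 i l)) /\
    (exists2 l, inI t l & F (EU0 i l)) /\
    (exists2 l, inI t l & F (EW0 i l)) /\
    (forall j, inI (r * s) j -> exists2 l, inI t l & F (EB0 i j l)) /\
    (forall j k, inI r j -> inI s k -> exists2 l, inI t l & F (EA0 i j k l)) /\
    (forall j, inI r j -> exists2 l, inI t l & F (EW i j l)).

Definition b1sub (F : pred edge) (i : nat) : bool :=
  all (fun j => F (EB1 i j)) (iota 1 (r * s)).
Definition a1sub (F : pred edge) (i j : nat) : bool :=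
  all (fun k => F (EA1 i j k)) (iota 1 s).
Definition a1sq (F : pred edge) (i : nat) : bool :=
  has (fun j => a1sub F i j) (iota 1 r).

Definition lastB (F : pred edge) (i : nat) : nat :=
  \max_(1 <= j < (r * s).+1 | ~~ F (EB1 i j)) j.
Definition lastA (F : pred edge) (i j : nat) : nat :=
  \max_(1 <= k < s.+1 | ~~ F (EA1 i j k)) k.
Definition reset (F : pred edge) : nat :=
  \max_(1 <= i < n.+1 | b1sub F i && ~~ a1sq F i) i.

Definition inBcond (F : pred edge) (e : edge) : bool :=
  let R := reset F in
  let c1 i := (R < i)%N && b1sub F i in
  let c2 i := (R < i)%N && ~~ b1sub F i in
  let c3 i := (i == R) in
  let c4 i := (i < R)%N in
  match e with
  | EA1 i j k => (c1 i || c3 i) && (lastA F i j < k)%N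
  | EA0 i j k _ => ((c1 i || c3 i) && (k <= lastA F i j)%N) || c2 i || c4 i
  | EB1 i j => c1 i || (c2 i && (lastB F i < j)%N) || c3 i
  | EB0 i j _ => (c2 i && (j <= lastB F i)%N) || c4 i
  | EU1 i _ => c1 i || c3 i
  | EU0 i _ => c2 i || c4 i
  | EW i j _ => (c1 i && a1sub F i j) || c4 i
  | EW0 i _ => c2 i || c3 i
  end.

Definition inBF (F : pred edge) (e : edge) : bool :=
  [&& inEdges e, F e & inBcond F e].

Fixpoint walk_to_T (F : pred edge) (v : vertex) (p : seq edge) : Prop :=
  match p with
  | [::] => v = T
  | e :: p' => F e /\ src e = v /\ walk_to_T F (dst e) p'
  end.

Definition walk_cost (p : seq edge) : rat := (\sum_(e <- p) cost e)%R.

Definition is_shortest_dist (F : pred edge) (y : vertex -> rat) : Prop :=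
  forall v, inVert v ->
    (exists p, walk_to_T F v p /\ walk_cost p = y v) /\
    (forall p, walk_to_T F v p -> (y v <= walk_cost p)%R).

Definition optimal (F : pred edge) (y : vertex -> rat) (e : edge) : Prop :=
  F e /\ (cost e + y (dst e) = y (src e))%R.

End Graph.

From mathcomp Require Import all_boot all_order all_algebra lra zify.
Set Implicit Arguments. Unset Strict Implicit. Unset Printing Implicit Defensive.
Import Order.TTheory GRing.Theory Num.Theory.

(* Write q_i = 4^i.  The distances in G_F have a closed form [pot]: y(u_i) is
   the sum of the q_m over the levels m >= i at which u_m cannot reach level
   m+1 at zero cost, y(w_i) exceeds y(u_i) by q_i exactly when i <= reset(F),
   and on the a- and b-chains the distance is that of the next level while the
   rest of the chain lies in F, and otherwise the cost of the cheapest exit, the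
   offsets (k-1)eps making later exits dearer.  As G_F is acyclic, a potential
   that vanishes at t, is dominated along every edge of F and is tight along
   some edge out of every other vertex is the distance function.  These local
   conditions are checked level by level, distinguishing the four cases of the
   definition of B_F, and the tight edges are exactly those of B_F. *)

Section BigmaxNat.
Variables (P : pred nat) (N : nat).
Local Notation L := (\max_(1 <= j < N.+1 | P j) j)%N.

Lemma bigmax_nat_le : (L <= N)%N.
Proof. by apply/bigmax_leqP_seq => j; rewrite mem_index_iota => /andP[_]. Qed.

Lemma bigmax_nat_gt j : (L < j <= N)%N -> ~~ P j.
Proof.
case/andP=> Lj jN; apply/negP => Pj.
have : (j <= L)%N.
  apply: (@leq_bigmax_seq _ _ P (fun j => j) j) Pj.
  by rewrite mem_index_iota; lia.
lia.
Qed.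

Lemma bigmax_nat_gt0 : (0 < L)%N -> P L.
Proof.
have : (L == 0)%N || P L.
  elim/big_ind: _ => // [x y Hx Hy|j ->]; last exact: orbT.
  by rewrite /maxn; case: ifP.
by case: eqP => [->|].
Qed.

Lemma bigmax_nat_eq0 : (L == 0)%N = ~~ has P (iota 1 N).
Proof.
have [L0|Lpos] := posnP L.
  apply/esym/hasPn => j; rewrite mem_iota => jN.
  by apply: bigmax_nat_gt; rewrite L0; lia.
apply/esym/negbF/hasP; exists L; last exact: bigmax_nat_gt0.
by rewrite mem_iota; have := bigmax_nat_le; lia.
Qed.

End BigmaxNat.

Section Edges.
Variables (n r s t : nat).

Lemma src_inVert e : inEdges n r s t e -> inVert n r s (src e).
Proof. by case: e => /=; rewrite /inI; lia. Qed.

Lemma dst_inVert e : (0 < r)%N -> (0 < s)%N ->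
  inEdges n r s t e -> inVert n r s (dst n r s e).
Proof.
move=> r_gt0 s_gt0; case: e => /=; rewrite /uvert /wvert /inI => *;
  repeat case: ifP => /= *; rewrite ?/inI; nia.
Qed.

(* Levels are weighted by M, which exceeds the heights used inside a level. *)
Definition height (v : vertex) : nat :=
  let M := (r * s + s).+2 in
  match v with
  | U i | W i => (n.+1 - i) * M
  | A i _ k => (n - i) * M + (r * s + s).+1 - k
  | B i j => (n - i) * M + (r * s).+1 - j
  | T => 0
  end.

Lemma height_dst e : inEdges n r s t e ->
  (height (dst n r s e) < height (src e))%N.
Proof.
case: e => /=; rewrite /uvert /wvert /inI => *;
  repeat case: ifP => /= *; rewrite ?/inI; nia.
Qed.

End Edges.

Section ShortestDistances.
Variables (n r s t : nat) (F : pred edge) (y : vertex -> rat).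
Hypotheses (r_gt0 : (0 < r)%N) (s_gt0 : (0 < s)%N).
Hypothesis F_sub : forall e, F e -> inEdges n r s t e.
Hypothesis y_dist : is_shortest_dist n r s F y.
Local Open Scope ring_scope.

Lemma walk_to_T_nil p : walk_to_T n r s F T p -> p = [::].
Proof. by case: p => //= e p [_ [+ _]]; case: e. Qed.

Lemma walk_cost_ge (p : vertex -> rat) : p T = 0 ->
  (forall e, F e -> p (src e) <= cost r s e + p (dst n r s e)) ->
  forall v w, walk_to_T n r s F v w -> p v <= walk_cost r s w.
Proof.
move=> pT p_edge v w; elim: w v => [|e w IHw] v /=.
  by move=> ->; rewrite pT /walk_cost big_nil.
case=> Fe [<- ew]; rewrite /walk_cost big_cons.
by apply: le_trans (p_edge e Fe) _; rewrite lerD2l IHw.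
Qed.

Lemma dist_T : y T = 0.
Proof.
have [[w [Tw <-]] _] := y_dist (v := T) isT.
by rewrite (walk_to_T_nil Tw) /walk_cost big_nil.
Qed.

Lemma dist_le_edge e : F e -> y (src e) <= cost r s e + y (dst n r s e).
Proof.
move=> Fe; have [[w [ew <-]] _] := y_dist (dst_inVert r_gt0 s_gt0 (F_sub Fe)).
have [_ /(_ (e :: w))] := y_dist (src_inVert (F_sub Fe)).
by rewrite /walk_cost big_cons; apply.
Qed.

(* Domination bounds [p] by the cost of every walk, hence by [y]; conversely,
   by induction on the height, [y] is at most [p] along the tight edges. *)
Lemma dist_eq_potential (p : vertex -> rat) : p T = 0 ->
  (forall e, F e -> p (src e) <= cost r s e + p (dst n r s e)) ->
  (forall v, inVert n r s v -> v <> T ->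
     exists2 e, F e & src e = v /\ cost r s e + p (dst n r s e) = p v) ->
  forall v, inVert n r s v -> y v = p v.
Proof.
move=> pT p_edge p_tight v; have [k] := ubnP (height n r s v).
elim: k v => // k IHk v hv vV; apply/eqP; rewrite eq_le; apply/andP; split.
  have [->|vT] : v = T \/ v <> T by case: (v); first [by left | by right].
    by rewrite dist_T pT.
  have [e Fe [ev <-]] := p_tight v vV vT; rewrite -ev.
  apply: le_trans (dist_le_edge Fe) _; rewrite lerD2l IHk //.
    by apply: leq_trans (height_dst (F_sub Fe)) _; rewrite ev -ltnS.
  exact: dst_inVert (F_sub Fe).
have [[w [vw <-]] _] := y_dist vV.
exact: walk_cost_ge vw.
Qed.

End ShortestDistances.

Section Potential.
Variables (n r s t : nat) (F : pred edge).
Hypotheses (r_gt0 : (0 < r)%N) (s_gt0 : (0 < s)%N).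
Hypothesis F_sub : forall e, F e -> inEdges n r s t e.
Hypothesis F_fun : functional n r s t F.
Local Notation R := (reset n r s F).

Lemma lastB_le i : (lastB r s F i <= r * s)%N.
Proof. exact: bigmax_nat_le. Qed.

Lemma lastB_lt_in i j : (lastB r s F i < j <= r * s)%N -> F (EB1 i j).
Proof. by move/bigmax_nat_gt; rewrite negbK. Qed.

Lemma lastB_ltS i j : (0 < j)%N -> F (EB1 i j) ->
  (lastB r s F i < j.+1)%N = (lastB r s F i < j)%N.
Proof.
move=> j_gt0 Fj; rewrite ltnS leq_eqVlt; case: eqP => //= Lj.
have := @bigmax_nat_gt0 (fun j => ~~ F (EB1 i j)) (r * s).
by rewrite -/(lastB _ _ _ _) Lj Fj => /(_ j_gt0).
Qed.

Lemma b1sub_lastB i : b1sub r s F i = (lastB r s F i == 0)%N.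
Proof.
by rewrite bigmax_nat_eq0 -all_predC; apply: eq_all => j /=; rewrite negbK.
Qed.

Lemma lastA_le i j : (lastA s F i j <= s)%N.
Proof. exact: bigmax_nat_le. Qed.

Lemma lastA_lt_in i j k : (lastA s F i j < k <= s)%N -> F (EA1 i j k).
Proof. by move/bigmax_nat_gt; rewrite negbK. Qed.

Lemma lastA_ltS i j k : (0 < k)%N -> F (EA1 i j k) ->
  (lastA s F i j < k.+1)%N = (lastA s F i j < k)%N.
Proof.
move=> k_gt0 Fk; rewrite ltnS leq_eqVlt; case: eqP => //= Lk.
have := @bigmax_nat_gt0 (fun k => ~~ F (EA1 i j k)) s.
by rewrite -/(lastA _ _ _ _) Lk Fk => /(_ k_gt0).
Qed.

Lemma a1sub_lastA i j : a1sub s F i j = (lastA s F i j == 0)%N.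
Proof.
by rewrite bigmax_nat_eq0 -all_predC; apply: eq_all => k /=; rewrite negbK.
Qed.

Lemma reset_le : (R <= n)%N.
Proof. exact: bigmax_nat_le. Qed.

Lemma reset_lt_a1sq i : (R < i <= n)%N -> b1sub r s F i -> a1sq r s F i.
Proof. by move/bigmax_nat_gt => /= /[swap] ->; rewrite negbK. Qed.

Lemma reset_gt0 : (0 < R)%N -> b1sub r s F R && ~~ a1sq r s F R.
Proof. exact: bigmax_nat_gt0. Qed.

(* The constructors are the cases (i)-(iv) of the definition of B_F; the
   indices are the comparisons of reset(F) with i, then b^1_i <= F and
   a^1_i [= F. *)
Variant level_spec (i : nat) :
    bool -> bool -> bool -> bool -> bool -> bool -> bool -> Type :=
  | LevelFree of lastB r s F i = 0 :
      level_spec i true true false false false true true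
  | LevelBlocked a : level_spec i true true false false false false a
  | LevelReset of lastB r s F i = 0 :
      level_spec i true false true false true true false
  | LevelBelow b a : level_spec i false false false true true b a.

Lemma levelP i : inI n i ->
  level_spec i (R <= i) (R < i) (i == R) (i < R) (i <= R)
    (b1sub r s F i) (a1sq r s F i).
Proof.
case/andP=> i_gt0 i_le; case: ltngtP => [Ri|iR|Ri].
- case b1: (b1sub r s F i); last exact: LevelBlocked.
  rewrite reset_lt_a1sq ?Ri //.
  by apply: LevelFree; apply/eqP; rewrite -b1sub_lastB.
- exact: LevelBelow.
- have R_gt0 : (0 < R)%N by rewrite Ri.
  rewrite -Ri; have /andP[b1 /negbTE a1] := reset_gt0 R_gt0; rewrite b1 a1.
  by apply: LevelReset; apply/eqP; rewrite -b1sub_lastB.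
Qed.

Local Open Scope ring_scope.

Definition pow4 (i : nat) : rat := (2 ^ (2 * i))%N%:R.
Definition offset (k : nat) : rat := (k - 1)%N%:R * eps r s.

(* The zero-cost b-chain from u_i leads to w_{i+1}, which is as close to t as
   u_{i+1}. *)
Definition free_level (i : nat) : bool := (R <= i)%N && b1sub r s F i.

Definition uval (i : nat) : rat :=
  \sum_(i <= m < n.+1) (if free_level m then 0 else pow4 m).

Definition pot (v : vertex) : rat :=
  match v with
  | U i => uval i
  | W i => uval i + (if (i <= R)%N then pow4 i else 0)
  | A i j k => uval i.+1 +
      (if free_level i && (lastA s F i j < k)%N then 0 else 2 * pow4 i + offset k)
  | B i j => uval i.+1 +
      (if (R <= i)%N && (lastB r s F i < j)%N then 0
       else 2 * pow4 i + 1 + offset j)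
  | T => 0
  end.

Arguments pot v : simpl never.

Lemma pow4_ge1 i : 1 <= pow4 i.
Proof. by rewrite ler1n expn_gt0. Qed.

Lemma pow4S i : pow4 i.+1 = 4 * pow4 i.
Proof. by rewrite /pow4 mulnS expnD natrM. Qed.

Lemma natr_exp2S i : (2 ^ (2 * i + 1))%N%:R = 2 * pow4 i :> rat.
Proof. by rewrite /pow4 expnD expn1 natrM mulrC. Qed.

Lemma offset1 : offset 1 = 0.
Proof. by rewrite /offset subnn mul0r. Qed.

Lemma offset_ge0 k : 0 <= offset k.
Proof. by rewrite /offset /eps mulr_ge0 ?invr_ge0. Qed.

Lemma offset_lt1 k : (k <= r * s)%N -> offset k < 1.
Proof.
have rs_gt0 : 0 < (r * s)%N%:R :> rat by rewrite ltr0n muln_gt0 r_gt0.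
by move=> ks; rewrite /offset /eps ltr_pdivrMr // mul1r ltr_nat; lia.
Qed.

Lemma offset_ltS k : (0 < k)%N -> offset k < offset k.+1.
Proof.
move=> k_gt0; rewrite /offset ltr_pM2r ?ltr_nat; first lia.
by rewrite /eps invr_gt0 ltr0n muln_gt0 r_gt0.
Qed.

Lemma pot_uvert i : pot (uvert n i) = uval i.
Proof. by rewrite /uvert; case: leqP => // ni; rewrite /uval big_geq. Qed.

Lemma pot_wvert i : pot (wvert n i) = uval i + (if (i <= R)%N then pow4 i else 0).
Proof.
rewrite /wvert; case: leqP => // ni; rewrite /uval big_geq // ifN ?addr0 //.
by rewrite -ltnNge (leq_ltn_trans reset_le).
Qed.

Section Level.
Variable i : nat.
Hypothesis i_in : inI n i.

Lemma uval_level : uval i = (if free_level i then 0 else pow4 i) + uval i.+1.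
Proof. by rewrite /uval big_ltn //; case/andP: i_in. Qed.

Lemma pot_B1 : pot (B i 1) =
  uval i.+1 + (if free_level i then 0 else 2 * pow4 i + 1).
Proof. by rewrite /pot offset1 addr0 ltnS leqn0 -b1sub_lastB. Qed.

Lemma pot_A1 j : pot (A i j 1) =
  uval i.+1 + (if free_level i && a1sub s F i j then 0 else 2 * pow4 i).
Proof. by rewrite /pot offset1 addr0 ltnS leqn0 -a1sub_lastA. Qed.

Ltac leif_lra :=
  move=> *; split; [lra | first [apply/eqP; lra | apply/negbTE/eqP => ?; lra]].

Lemma leif_EU1 l : pot (U i) <= cost r s (EU1 i l) + pot (dst n r s (EU1 i l))
  ?= iff inBcond n r s F (EU1 i l).
Proof.
rewrite /= add0r pot_B1 /pot uval_level /free_level.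
by have := pow4_ge1 i; case: (levelP i_in) => [_|a|_|b a] /=; leif_lra.
Qed.

Lemma leif_EU0 l : pot (U i) <= cost r s (EU0 i l) + pot (dst n r s (EU0 i l))
  ?= iff inBcond n r s F (EU0 i l).
Proof.
rewrite /= -/(pow4 i) pot_uvert /pot uval_level /free_level.
by have := pow4_ge1 i; case: (levelP i_in) => [_|a|_|b a] /=; leif_lra.
Qed.

Lemma leif_EW0 l : pot (W i) <= cost r s (EW0 i l) + pot (dst n r s (EW0 i l))
  ?= iff inBcond n r s F (EW0 i l).
Proof.
rewrite /= -/(pow4 i) pot_wvert pow4S /pot uval_level /free_level.
by have := pow4_ge1 i; case: (levelP i_in) => [_|a|_|b a] /=; leif_lra.
Qed.

Lemma leif_EW j l : inI r j ->
  pot (W i) <= cost r s (EW i j l) + pot (dst n r s (EW i j l))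
  ?= iff inBcond n r s F (EW i j l).
Proof.
move=> j_in; rewrite /= add0r pot_A1 /pot uval_level /free_level.
have := pow4_ge1 i; case aj: (a1sub s F i j).
  have : a1sq r s F i by apply/hasP; exists j; rewrite ?mem_iota //; lia.
  by case: (levelP i_in) => [_|a|_|b a] //=; leif_lra.
by case: (levelP i_in) => [_|a|_|b a] /=; leif_lra.
Qed.

Lemma leif_EA1 j k : inI s k -> F (EA1 i j k) ->
  pot (A i j k) <= cost r s (EA1 i j k) + pot (dst n r s (EA1 i j k))
  ?= iff inBcond n r s F (EA1 i j k).
Proof.
case/andP=> k_gt0 k_le Fe; have ltS := lastA_ltS k_gt0 Fe.
have := offset_lt1 (leq_trans k_le (leq_pmull s r_gt0)).
have := offset_ltS k_gt0; have := offset_ge0 k; have := pow4_ge1 i.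
rewrite /= add0r; case: ltnP => [ks|sk].
  rewrite /pot ltS /free_level.
  case: (levelP i_in) => [_|a|_|b a] /=;
    by case: (lastA s F i j < k)%N => /=; leif_lra.
have ek : k = s by apply/eqP; rewrite eqn_leq k_le.
rewrite pot_B1 /pot ek in ltS *; rewrite -ltS ltnS lastA_le andbT /free_level.
by case: (levelP i_in) => [_|a|_|b a] /=; leif_lra.
Qed.

Lemma leif_EA0 j k l :
  pot (A i j k) <= cost r s (EA0 i j k l) + pot (dst n r s (EA0 i j k l))
  ?= iff inBcond n r s F (EA0 i j k l).
Proof.
rewrite /= natr_exp2S -/(offset k) pot_uvert /pot [(k <= _)%N]leqNgt /free_level.
have := offset_ge0 k; have := pow4_ge1 i.
case: (levelP i_in) => [_|a|_|b a] /=;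
  by case: (lastA s F i j < k)%N => /=; leif_lra.
Qed.

Lemma leif_EB1 j : inI (r * s) j -> F (EB1 i j) ->
  pot (B i j) <= cost r s (EB1 i j) + pot (dst n r s (EB1 i j))
  ?= iff inBcond n r s F (EB1 i j).
Proof.
case/andP=> j_gt0 j_le Fe; have ltS := lastB_ltS j_gt0 Fe.
have := offset_lt1 j_le; have := offset_ltS j_gt0; have := offset_ge0 j.
have := pow4_ge1 i; rewrite /= add0r; case: ltnP => [jrs|rsj].
  rewrite /pot ltS; case: (levelP i_in) => [->|a|->|b a]; rewrite ?j_gt0 /=;
    by case: (lastB r s F i < j)%N => /=; leif_lra.
have ej : j = (r * s)%N by apply/eqP; rewrite eqn_leq j_le.
rewrite pot_wvert pow4S /pot ej in ltS *; rewrite -ltS ltnS lastB_le andbT.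
by case: (levelP i_in) => [_|a|_|b a] /=; leif_lra.
Qed.

Lemma leif_EB0 j l : inI (r * s) j ->
  pot (B i j) <= cost r s (EB0 i j l) + pot (dst n r s (EB0 i j l))
  ?= iff inBcond n r s F (EB0 i j l).
Proof.
case/andP=> j_gt0 _.
rewrite /= natr_exp2S -/(offset j) pot_uvert /pot [(j <= _)%N]leqNgt.
have := offset_ge0 j; have := pow4_ge1 i.
case: (levelP i_in) => [->|a|->|b a]; rewrite ?j_gt0 /=;
  by case: (lastB r s F i < j)%N => /=; leif_lra.
Qed.

Lemma inBcond_EU l l' : inBcond n r s F (EU1 i l) || inBcond n r s F (EU0 i l').
Proof. by rewrite /inBcond /=; case: (levelP i_in). Qed.

Lemma inBcond_EA j k l :
  inBcond n r s F (EA1 i j k) || inBcond n r s F (EA0 i j k l).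
Proof.
rewrite /inBcond /= [(k <= _)%N]leqNgt.
by case: (levelP i_in) => [_|a|_|b a]; case: (lastA s F i j < k)%N.
Qed.

Lemma inBcond_EB j l : inBcond n r s F (EB1 i j) || inBcond n r s F (EB0 i j l).
Proof.
rewrite /inBcond /= [(j <= _)%N]leqNgt.
by case: (levelP i_in) => [_|a|_|b a]; case: (lastB r s F i < j)%N.
Qed.

Lemma inBcond_EA1_in j k : (k <= s)%N ->
  inBcond n r s F (EA1 i j k) -> F (EA1 i j k).
Proof. by move=> k_le /andP[_ LAk]; apply: lastA_lt_in; rewrite LAk. Qed.

Lemma inBcond_EB1_in j : inI (r * s) j ->
  inBcond n r s F (EB1 i j) -> F (EB1 i j).
Proof.
case/andP=> j_gt0 j_le B1; apply: lastB_lt_in; rewrite j_le andbT.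
move: B1; rewrite /inBcond /=.
by case: (levelP i_in) => [->|a|->|b a] //=; rewrite orbF.
Qed.

Lemma exists_tight_EW : exists e, [/\ F e, src e = W i & inBcond n r s F e].
Proof.
have [_ [_ [[l0 _ F0] [_ [_ Fw]]]]] := F_fun i_in.
case: (ltngtP R i) => [Ri|iR|Ri].
- case b1: (b1sub r s F i); last by exists (EW0 i l0); rewrite /inBcond /= Ri b1.
  have /hasP[j] : a1sq r s F i.
    by case/andP: i_in => _ i_le; apply: reset_lt_a1sq b1; rewrite Ri.
  rewrite mem_iota => j_r aj; have [|l _ Fl] := Fw j; first by rewrite /inI; lia.
  by exists (EW i j l); rewrite /inBcond /= Ri b1 aj.
- have [l _ Fl] := Fw 1%N r_gt0.
  by exists (EW i 1 l); rewrite /inBcond /= iR orbT.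
- by exists (EW0 i l0); rewrite /inBcond /= Ri eqxx orbT.
Qed.

End Level.

Lemma exists_tight_edge v : inVert n r s v -> v <> T ->
  exists e, [/\ F e, src e = v & inBcond n r s F e].
Proof.
case: v => [i|i|i j k|i j|] //= v_in _.
- have [[l1 _ F1] [[l0 _ F0] _]] := F_fun v_in.
  case/orP: (inBcond_EU v_in l1 l0) => ?.
  + by exists (EU1 i l1).
  + by exists (EU0 i l0).
- exact: exists_tight_EW.
- case/and3P: v_in => i_in j_in k_in.
  have [_ [_ [_ [_ [FA _]]]]] := F_fun i_in; have [l _ Fl] := FA j k j_in k_in.
  case/orP: (inBcond_EA i_in j k l) => B1; last by exists (EA0 i j k l).
  by exists (EA1 i j k); split=> //; apply: inBcond_EA1_in; case/andP: k_in.
- case/andP: v_in => i_in j_in.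
  have [_ [_ [_ [FB _]]]] := F_fun i_in; have [l _ Fl] := FB j j_in.
  case/orP: (inBcond_EB i_in j l) => B1; last by exists (EB0 i j l).
  by exists (EB1 i j); split=> //; apply: inBcond_EB1_in.
Qed.

Lemma pot_leif e : inEdges n r s t e -> F e ->
  pot (src e) <= cost r s e + pot (dst n r s e) ?= iff inBcond n r s F e.
Proof.
case: e => [i j k|i j k l|i j|i j l|i l|i l|i j l|i l] /=.
- by case/and3P=> i_in _ k_in; apply: leif_EA1.
- by case/andP=> i_in _ _; apply: leif_EA0.
- by case/andP=> i_in j_in; apply: leif_EB1.
- by case/and3P=> i_in j_in _ _; apply: leif_EB0.
- by case/andP=> i_in _ _; apply: leif_EU1.
- by case/andP=> i_in _ _; apply: leif_EU0.
- by case/and3P=> i_in j_in _ _; apply: leif_EW.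
- by case/andP=> i_in _ _; apply: leif_EW0.
Qed.

Lemma pot_tightP e : inEdges n r s t e -> F e ->
  reflect (cost r s e + pot (dst n r s e) = pot (src e)) (inBcond n r s F e).
Proof. by move=> Ee Fe; rewrite -(pot_leif Ee Fe).2 eq_sym; apply: eqP. Qed.

Lemma pot_attained v : inVert n r s v -> v <> T ->
  exists2 e, F e & src e = v /\ cost r s e + pot (dst n r s e) = pot v.
Proof.
move=> v_in vT; have [e [Fe <- Be]] := exists_tight_edge v_in vT.
by exists e => //; split=> //; apply/(pot_tightP (F_sub Fe) Fe).
Qed.

End Potential.

Theorem mainTheorem5 (n r s t : nat) (F : pred edge) (y : vertex -> rat) :
  (0 < r)%N -> (0 < s)%N ->
  (forall e, F e -> inEdges n r s t e) ->
  functional n r s t F ->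
  is_shortest_dist n r s F y ->
  forall e, optimal n r s F y e <-> inBF n r s t F e.
Proof.
move=> r_gt0 s_gt0 F_sub F_fun y_dist.
have y_pot := dist_eq_potential r_gt0 s_gt0 F_sub y_dist (p := pot n r s F)
  erefl (fun e Fe => pot_leif r_gt0 s_gt0 (F_sub e Fe) Fe)
  (pot_attained r_gt0 s_gt0 F_sub F_fun).
move=> e; rewrite /optimal /inBF.
split=> [[Fe]|/and3P[Ee Fe]]; first have Ee := F_sub e Fe.
all: rewrite !y_pot ?(src_inVert Ee) ?(dst_inVert r_gt0 s_gt0 Ee) //.
  by move/(pot_tightP r_gt0 s_gt0 Ee Fe) => ->; rewrite Ee Fe.
by move/(pot_tightP r_gt0 s_gt0 Ee Fe).
Qed.
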